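(* Let $q$ be a prime power and $\epsilon>0$. There is a constant $C=C(q,\epsilon)$ such that the following holds for every positive integer $n$: let $Z$ be a random vector in $\mathbb{F}_q^n$, let $m$ be a positive integer with $m\le H_\infty(Z)-n\epsilon$, let $\mathcal{C}$ be uniform over the set $\mathscr{C}$ of all $[n,n-m]_q$ linear codes, and let $H$ be a parity-check matrix of $\mathcal{C}$ (an $m\times n$ rank-$m$ matrix with kernel $\mathcal{C}$). Then $$\mathbb{E}_{\mathcal{C}\sim\mathscr{C}}\big[\|q^mP_{HZ}\|_\infty\big]\le C.$$
   Context: $H_\infty(Z)=\min_x(-\log_qP_Z(x))$ is the min-entropy (base $q$). $\|f\|_\infty=\max_x|f(x)|$. $P_{HZ}$ is the distribution of $HZ$ on $\mathbb{F}_q^m$ for fixed $\mathcal{C}$. *)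

From HB Require Import structures.
From mathcomp Require Import all_boot all_order all_algebra all_field.
From mathcomp Require Import reals constructive_ereal exp.
Set Implicit Arguments. Unset Strict Implicit. Unset Printing Implicit Defensive.
Import Order.TTheory GRing.Theory Num.Theory.
Local Open Scope ring_scope.

Section Defs.
Variables (F : finFieldType) (R : realType).

Definition is_distr (T : finType) (P : {ffun T -> R}) : Prop :=
  (forall x, 0 <= P x) /\ \sum_(x : T) P x = 1.

Definition min_entropy (T : finType) (P : {ffun T -> R}) : \bar R :=
  \big[Order.min/+oo%E]_(x : T | 0 < P x) ((- ln (P x) / ln (#|F|%:R : R))%:E).

Definition linear_codes (n k : nat) : {set {set 'rV[F]_n}} :=
  [set C : {set 'rV[F]_n} | [exists G : 'M[F]_(k, n),
     (\rank G == k) && (C == [set x : 'rV[F]_n | (x <= G)%MS])]].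

Definition parity_check (n m : nat) (C : {set 'rV[F]_n}) (H : 'M[F]_(m, n)) : Prop :=
  \rank H = m /\ forall x : 'rV[F]_n, (x \in C) = (H *m x^T == 0).

Definition distr_HZ (n m : nat) (H : 'M[F]_(m, n)) (P : {ffun 'rV[F]_n -> R})
  (y : 'cV[F]_m) : R :=
  \sum_(x : 'rV[F]_n | H *m x^T == y) P x.

Definition sup_norm (T : finType) (f : T -> R) : R :=
  \big[Num.max/0]_(t : T) `|f t|.

End Defs.

(* Let X_C := ||q^m P_HZ||_oo for the code C.  Its K-th power is at most
   q^(mK) sum_y P_HZ(y)^K, and sum_y P_HZ(y)^K is the probability that K
   independent copies x_0, ..., x_(K-1) of Z have the same syndrome, i.e. that
   every difference x_i - x_0 lies in C.  A uniformly random [n, n-m] code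
   contains a fixed r-dimensional space with probability at most q^(-mr).
   Drawing the samples one by one, a new sample either falls in the affine
   span of the previous ones (at most q^K points, each of mass at most
   q^(-H_oo(Z))) or raises the dimension, which costs a factor q^(-m); hence
   E_C[X_C^K] <= q^(mK) (q^(K - H_oo(Z)) + q^(-m))^(K-1).  With
   K = floor(n eps) + 1 this is at most q^m (q+1)^(K-1), and since
   m <= n < K / eps < c K for c = floor(1/eps) + 1, that is at most
   ((q+1) q^c)^K, and a K-th moment bound B^K for nonnegative X_C forces
   E_C[X_C] <= 2 B. *)

From HB Require Import structures.
From mathcomp Require Import all_boot all_order all_algebra all_field.
From mathcomp Require Import reals constructive_ereal exp.
From mathcomp Require Import ring lra.
Import Order.TTheory GRing.Theory Num.Theory.
Local Open Scope ring_scope.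

Set Implicit Arguments.
Unset Strict Implicit.
Unset Printing Implicit Defensive.

Lemma card_set_sumE (T : finType) (A p : pred T) :
  #|[set x | A x && p x]| = (\sum_(x | A x) p x)%N.
Proof. by rewrite -sum1dep_card big_mkcondr; apply: eq_bigr => x _; case: (p x). Qed.

Section RowFreeMatrices.
Variable F : fieldType.

Lemma row_free_col_mx r k (v : 'rV[F]_k) (A : 'M[F]_(r, k)) :
  row_free (col_mx v A) = row_free A && ~~ (v <= A)%MS.
Proof.
rewrite /row_free -addsmxE addsmxC; have [vA | vNA] := boolP (v <= A)%MS.
  by rewrite andbF (addsmx_idPl vA) ltn_eqF // ltnS rank_leq_row.
have ltA : (\rank A < \rank (A + v))%N.
  by apply: rank_ltmx; rewrite ltmxE addsmxSl addsmx_sub submx_refl.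
have leA : (\rank (A + v) <= (\rank A).+1)%N.
  rewrite -[X in (_ <= X)%N]addn1 (leq_trans (mxrank_adds_leqif A v)) //.
  by rewrite leq_add2l rank_leq_row.
have -> : \rank (A + v)%MS = (\rank A).+1 by apply/eqP; rewrite eqn_leq leA.
by rewrite andbT eqSS.
Qed.

Lemma row_free_eqmx_unit r k (V1 V2 : 'M[F]_(r, k)) :
  row_free V1 -> row_free V2 -> exists2 A : 'M[F]_k, A \in unitmx & (V1 *m A :=: V2)%MS.
Proof.
move=> /eqnP frV1 /eqnP frV2.
exists (invmx (row_ebase V1) *m row_ebase V2).
  by rewrite unitmx_mul unitmx_inv !row_ebase_unit.
apply: eqmx_trans (_ : ((pid_mx r : 'M_(r, k)) *m row_ebase V2 :=: V2)%MS).
  rewrite -{1}(mulmx_ebase V1) frV1 -!mulmxA mulKVmx ?row_ebase_unit //.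
  by apply: eqmxMfull; rewrite row_full_unit col_ebase_unit.
rewrite -{2}(mulmx_ebase V2) frV2 -mulmxA; apply: eqmx_sym.
by apply: eqmxMfull; rewrite row_full_unit col_ebase_unit.
Qed.

End RowFreeMatrices.

Section RowFreeCount.
Variable F : finFieldType.
Local Notation q := #|F|.

Lemma card_submx_row_free r k (A : 'M[F]_(r, k)) :
  row_free A -> #|[set v : 'rV[F]_k | (v <= A)%MS]| = (q ^ r)%N.
Proof.
move=> frA; have -> : [set v | (v <= A)%MS] = (mulmx^~ A) @: [set: 'rV[F]_r].
  by apply/setP => v; rewrite inE; apply/submxP/imsetP => [[u ->]|[u _ ->]]; exists u.
by rewrite card_imset ?cardsT ?card_mx ?mul1n //; exact: row_free_inj.
Qed.

Lemma card_row_free r k :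
  #|[set A : 'M[F]_(r, k) | row_free A]| = (\prod_(i < r) (q ^ k - q ^ i))%N.
Proof.
elim: r => [|r IHr].
  rewrite big_ord0 -(expn0 q) -(mul0n k) -card_mx -cardsT.
  by apply: eq_card => A; rewrite !inE /row_free -leqn0 rank_leq_row.
have -> : [set B : 'M[F]_(r.+1, k) | row_free B] = (fun p => col_mx p.2 p.1) @:
    [set p : 'M[F]_(r, k) * 'rV[F]_k | row_free p.1 && ~~ (p.2 <= p.1)%MS].
  apply/setP => B; rewrite inE; apply/idP/imsetP => [frB|[[A v]]].
    exists (dsubmx (B : 'M_(1 + r, k)), usubmx (B : 'M_(1 + r, k)));
      by rewrite ?inE /= -?row_free_col_mx vsubmxK.
  by rewrite inE /= -row_free_col_mx => frB ->.
rewrite card_imset; last first.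
  by move=> [A v] [A' v'] /= eqAv; case: (@eq_col_mx _ 1 r k v A v' A' eqAv) => -> ->.
rewrite -sum1dep_card.
rewrite -(pair_big_dep (@row_free _ _ _) (fun A v => ~~ (v <= A)%MS) (fun _ _ => 1%N)).
rewrite big_ord_recr /= -IHr -sum_nat_cond_const; apply: eq_bigr => A frA.
rewrite sum1dep_card.
have := cardsC [set v : 'rV[F]_k | (v <= A)%MS].
rewrite card_mx mul1n (card_submx_row_free frA) => <-; rewrite addKn.
by apply: eq_card => v; rewrite !inE.
Qed.

End RowFreeCount.

Section CodesContaining.
Variables (F : finFieldType) (n d : nat).
Local Notation q := #|F|.
Local Notation codes := (linear_codes F n d).

Lemma linear_codesP (C : {set 'rV[F]_n}) :
  reflect (exists2 G : 'M[F]_(d, n), row_free G & C = [set x | (x <= G)%MS])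
          (C \in codes).
Proof.
rewrite inE; apply: (iffP existsP) => [[G /andP [frG /eqP ->]]|[G frG ->]].
  by exists G.
by exists G; apply/andP.
Qed.

Definition rows_in (C : {set 'rV[F]_n}) r (V : 'M[F]_(r, n)) := [forall i, row i V \in C].

Lemma rows_in_submx m r (G : 'M[F]_(m, n)) (V : 'M[F]_(r, n)) :
  rows_in [set x | (x <= G)%MS] V = (V <= G)%MS.
Proof. by apply/forallP/row_subP => VG i; move: (VG i); rewrite inE. Qed.

Definition codes_containing r (V : 'M[F]_(r, n)) := [set C in codes | rows_in C V].

Lemma card_codes_containing_le r (V1 V2 : 'M[F]_(r, n)) : row_free V1 -> row_free V2 ->
  (#|codes_containing V1| <= #|codes_containing V2|)%N.
Proof.
move=> frV1 frV2; have [A Au eqV] := row_free_eqmx_unit frV1 frV2.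
pose mulA (C : {set 'rV[F]_n}) := (mulmx^~ A) @: C.
have mulA_submx m (G : 'M[F]_(m, n)) : mulA [set x | (x <= G)%MS] = [set y | (y <= G *m A)%MS].
  apply/setP => y; rewrite inE; apply/imsetP/idP => [[x + ->]|yGA].
    by rewrite inE; exact: submxMr.
  by exists (y *m invmx A); rewrite ?mulmxKV // inE -(mulmxK Au G) submxMr.
rewrite -(card_imset _ (imset_inj (can_inj (mulmxK Au)))).
apply/subset_leq_card/subsetP => _ /imsetP [C /setIdP [/linear_codesP [G frG ->] VG] ->].
rewrite -/(mulA _) mulA_submx inE rows_in_submx; apply/andP; split.
  by apply/linear_codesP; exists (G *m A); rewrite // /row_free mxrankMfree ?row_free_unit.
by rewrite -eqV submxMr // -rows_in_submx.
Qed.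

Lemma card_row_free_submx (G : 'M[F]_(d, n)) r : row_free G ->
  #|[set V : 'M[F]_(r, n) | row_free V && (V <= G)%MS]| =
  #|[set X : 'M[F]_(r, d) | row_free X]|.
Proof.
move=> frG; rewrite -(card_imset _ (row_free_inj frG)); apply: eq_card => V.
rewrite !inE; apply/andP/imsetP => [[frV /submxP [X eqV]]|[X + ->]].
  by exists X; rewrite // inE /row_free -(mxrankMfree _ frG) -eqV.
by rewrite inE /row_free mxrankMfree // submxMl.
Qed.

Lemma card_codes_containing_mul r (V : 'M[F]_(r, n)) : row_free V ->
  (#|codes_containing V| * #|[set X : 'M[F]_(r, n) | row_free X]| =
   #|codes| * #|[set X : 'M[F]_(r, d) | row_free X]|)%N.
Proof.
move=> frV; rewrite mulnC -sum_nat_cond_const.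
transitivity (\sum_(X : 'M[F]_(r, n) | row_free X) \sum_(C in codes) rows_in C X)%N.
  apply: eq_bigr => X frX; rewrite -card_set_sumE; apply/eqP.
  by rewrite eqn_leq !card_codes_containing_le.
rewrite exchange_big /= -sum_nat_const; apply: eq_bigr => C; case/linear_codesP => G frG ->.
rewrite -(card_row_free_submx r frG) card_set_sumE.
by apply: eq_bigr => X _; rewrite rows_in_submx.
Qed.

Lemma card_codes_containing_bound m r (V : 'M[F]_(r, n)) : (d + m)%N = n ->
  (#|codes_containing V| * q ^ (m * \rank V) <= #|codes|)%N.
Proof.
move=> dmn; have eqV : codes_containing V = codes_containing (row_base V).
  apply: eq_finset => C; apply: andb_id2l; case/linear_codesP => G _ ->.
  by rewrite !rows_in_submx eq_row_base.
have q_gt1 : (1 < q)%N := finNzRing_gt1 F.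
have rank_le : (\rank V <= n)%N := rank_leq_col V.
have count_gt0 : (0 < #|[set X : 'M[F]_(\rank V, n) | row_free X]|)%N.
  rewrite card_row_free prodn_gt0 // => i.
  by rewrite subn_gt0 ltn_exp2l // (leq_trans (ltn_ord i)).
rewrite eqV -(leq_pmul2r count_gt0) mulnAC card_codes_containing_mul ?row_base_free //.
rewrite -mulnA leq_mul2l !card_row_free mulnC expnM -[X in (_ ^ X)%N](card_ord (\rank V)).
rewrite -prod_nat_const -big_split /= orbC; apply/orP; left; apply: leq_prod => i _.
rewrite mulnBr -!expnD (addnC m) dmn addnC leq_sub2l // leq_pexp2l ?leq_addr //.
exact: ltnW.
Qed.

End CodesContaining.

Section IteratedMean.
Variables (R : numDomainType) (T : finType) (P : T -> R).

Fixpoint iter_mean (j : nat) (f : seq T -> R) (s : seq T) : R :=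
  if j is j'.+1 then \sum_x P x * iter_mean j' f (rcons s x) else f s.

Lemma iter_mean_sum (I : finType) (A : pred I) (c : R) (f : I -> seq T -> R) j s :
  c * \sum_(i in A) iter_mean j (f i) s =
  iter_mean j (fun t => c * \sum_(i in A) f i t) s.
Proof.
elim: j s => [//|j IHj] s /=; rewrite exchange_big mulr_sumr; apply: eq_bigr => x _.
by rewrite -IHj -mulr_sumr mulrCA.
Qed.

Lemma iter_mean_all (p : pred T) j s :
  iter_mean j (fun t => (all p t)%:R) s = (all p s)%:R * (\sum_(x | p x) P x) ^+ j.
Proof.
set S := \sum_(x | p x) P x.
have sumS : S = \sum_x P x * (p x)%:R.
  by rewrite /S big_mkcond; apply: eq_bigr => x _; case: (p x); rewrite ?mulr1 ?mulr0.
elim: j s => [|j IHj] s /=; first by rewrite mulr1.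
under eq_bigr do rewrite IHj all_rcons -mulnb natrM.
rewrite exprS [X in _ = _ * (X * _)]sumS mulr_suml mulr_sumr.
by apply: eq_bigr => x _; ring.
Qed.

Hypothesis P_ge0 : forall x, 0 <= P x.

Lemma iter_mean_le (f g : seq T -> R) j s : (forall t, f t <= g t) ->
  iter_mean j f s <= iter_mean j g s.
Proof.
move=> fg; elim: j s => [|j IHj] s /=; first exact: fg.
by apply: ler_sum => x _; apply: ler_wpM2l.
Qed.

Lemma iter_mean_geometric (g : seq T -> R) (c : R) K : 0 <= c ->
  (forall s, (size s < K)%N -> \sum_x P x * g (rcons s x) <= c * g s) ->
  forall j s, (size s + j <= K)%N -> iter_mean j g s <= c ^+ j * g s.
Proof.
move=> c_ge0 step; elim=> [|j IHj] s sK /=; first by rewrite mul1r.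
apply: le_trans (_ : \sum_x P x * (c ^+ j * g (rcons s x)) <= _).
  by apply: ler_sum => x _; rewrite ler_wpM2l ?IHj // size_rcons addSnnS.
under eq_bigr do rewrite mulrCA; rewrite -mulr_sumr exprSr -mulrA ler_wpM2l ?exprn_ge0 //.
by apply: step; rewrite -addn1 (leq_trans _ sK) // leq_add2l.
Qed.

End IteratedMean.

Lemma sum_pushforward_expr (R : comPzSemiRingType) (T U : finType) (f : T -> U)
    (P : T -> R) k :
  \sum_u (\sum_(x | f x == u) P x) ^+ k.+1 =
  \sum_x P x * (\sum_(z | f z == f x) P z) ^+ k.
Proof.
rewrite [RHS](partition_big f xpredT) //=; apply: eq_bigr => u _.
by rewrite exprS mulr_suml; apply: eq_big => // x /eqP ->.
Qed.

Section RealBounds.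
Variable R : realType.

Lemma sup_norm_ge0 (T : finType) (f : T -> R) : 0 <= sup_norm f.
Proof. by apply: (big_ind (fun x => 0 <= x)) => // x y x_ge0 y_ge0; rewrite le_max x_ge0. Qed.

Lemma sup_norm_expr_le (T : finType) (f : T -> R) k : (0 < k)%N ->
  sup_norm f ^+ k <= \sum_t `|f t| ^+ k.
Proof.
move=> k_gt0; set S := \sum_t _.
suff [] : 0 <= sup_norm f /\ sup_norm f ^+ k <= S by [].
apply: (big_ind (fun M => 0 <= M /\ M ^+ k <= S)).
- by rewrite expr0n gtn_eqF // sumr_ge0 // => t _; rewrite exprn_ge0.
- by move=> x y [x_ge0 xS] [y_ge0 yS]; rewrite maxEle; case: ifP.
- move=> t _; split => //; rewrite /S (bigD1 t) //= lerDl sumr_ge0 // => i _.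
  exact: exprn_ge0.
Qed.

Lemma mean_le_of_moment (I : finType) (A : {set I}) (X : I -> R) (B : R) K :
  (0 < K)%N -> 0 < B -> (forall i, 0 <= X i) ->
  #|A|%:R^-1 * \sum_(i in A) X i ^+ K <= B ^+ K ->
  #|A|%:R^-1 * \sum_(i in A) X i <= 2 * B.
Proof.
case: K => // k _ B_gt0 X_ge0 moment.
(* trivial if [X i <= B]; otherwise [(X i / B) ^+ k >= 1] *)
have split i : X i <= B + X i ^+ k.+1 / B ^+ k.
  have [XB|BX] := lerP (X i) B.
    by rewrite (le_trans XB) // lerDl divr_ge0 ?exprn_ge0 ?X_ge0 // ltW.
  apply: le_trans (_ : X i ^+ k.+1 / B ^+ k <= _); last by rewrite lerDr ltW.
  rewrite exprS -mulrA -expr_div_n ler_peMr ?X_ge0 // exprn_ege1 //.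
  by rewrite ler_pdivlMr // mul1r ltW.
have N_ge0 : 0 <= #|A|%:R^-1 :> R by rewrite invr_ge0 ler0n.
apply: le_trans (_ : #|A|%:R^-1 * \sum_(i in A) (B + X i ^+ k.+1 / B ^+ k) <= _).
  by rewrite ler_wpM2l //; apply: ler_sum => i _.
rewrite big_split /= mulrDr -mulr_suml mulrA mulr2n mulrDl mul1r.
apply: lerD; last by rewrite ler_pdivrMr ?exprn_gt0 // -exprS.
rewrite sumr_const -[B *+ _]mulr_natr mulrCA ger_pMr //.
by have [->|A_gt0] := posnP #|A|; rewrite ?invr0 ?mul0r // mulVf ?pnatr_eq0 -?lt0n.
Qed.

Lemma le_min_entropy_prob (F : finFieldType) (T : finType) (P : {ffun T -> R}) e x :
  ((e%:R : R)%:E <= min_entropy F P)%E -> P x <= (#|F|%:R ^+ e)^-1.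
Proof.
move=> eH; have q_gt1 : 1 < #|F|%:R :> R by rewrite ltr1n finNzRing_gt1.
have qe_gt0 : 0 < #|F|%:R ^+ e :> R by rewrite exprn_gt0 // (lt_trans ltr01).
have [Px_gt0|] := ltrP 0 (P x); last by move/le_trans; apply; rewrite invr_ge0 ltW.
have /(le_trans eH) : (min_entropy F P <= (- ln (P x) / ln #|F|%:R)%:E)%E.
  exact: bigmin_le_cond.
rewrite lee_fin ler_pdivlMr ?ln_gt0 // => eq_le.
rewrite -div1r ler_pdivlMr // -(@ler_ln R) ?posrE ?mulr_gt0 //.
by rewrite ln1 lnM ?posrE // lnXn ?(lt_trans ltr01) // -[ln _ *+ _]mulr_natl; lra.
Qed.

Lemma distr_mass_bound (T : finType) (P : {ffun T -> R}) (rho : R) :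
  is_distr P -> (forall x, P x <= rho) -> 1 <= #|T|%:R * rho.
Proof.
move=> [_ sumP] P_le; rewrite -[X in X <= _]sumP mulrC mulr_natr -sumr_const.
exact: ler_sum.
Qed.

End RealBounds.

Section SyndromeMoments.
Variables (R : realType) (F : finFieldType) (n : nat) (P : {ffun 'rV[F]_n -> R}).
Hypotheses (P_ge0 : forall x, 0 <= P x) (P_sum1 : \sum_x P x = 1).
Local Notation Q := (#|F|%:R : R).

(* The rows [nth x0 s i - x0] for [i >= size s] are zero. *)
Definition diff_mx K (x0 : 'rV[F]_n) (s : seq 'rV[F]_n) : 'M[F]_(K, n) :=
  \matrix_(i < K) (nth x0 s i - x0).

Lemma diff_mx_rcons K x0 s x : (size s < K)%N ->
  (diff_mx K x0 s <= diff_mx K x0 (rcons s x))%MS /\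
  (x - x0 <= diff_mx K x0 (rcons s x))%MS.
Proof.
move=> sK; have row_rcons (i : 'I_K) :
    row i (diff_mx K x0 (rcons s x)) = if (i < size s)%N then nth x0 s i - x0
                                       else if i == size s :> nat then x - x0 else 0.
  by rewrite rowK nth_rcons; do 2?case: ifP => //; rewrite subrr.
split.
  apply/row_subP => i; rewrite rowK; have [lt_is|le_si] := ltnP i (size s).
    by have := row_rcons i; rewrite lt_is => <-; exact: row_sub.
  by rewrite nth_default // subrr sub0mx.
by have := row_rcons (Ordinal sK); rewrite /= ltnn eqxx => <-; exact: row_sub.
Qed.

Lemma card_coset_submx K (M : 'M[F]_(K, n)) (h : 'rV[F]_n) :
  (#|[set x : 'rV[F]_n | ((x - h)%R <= M)%MS]| <= #|F| ^ K)%N.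
Proof.
apply: leq_trans (_ : #|[set (c *m M + h)%R | c in 'rV[F]_K]| <= _)%N.
  apply/subset_leq_card/subsetP => x; rewrite inE => /submxP [c eq_c].
  by apply/imsetP; exists c; rewrite // -eq_c subrK.
by rewrite (leq_trans (leq_imset_card _ _)) // cardT -cardE card_mx mul1n.
Qed.

(* A new point either lies in the current affine span, which has at most
   [q ^ K] points, each of mass at most [rho], or raises the rank by one. *)
Lemma diff_rank_step K x0 s (a rho : R) : (size s < K)%N ->
  (forall x, P x <= rho) -> 0 <= a -> a <= 1 ->
  \sum_x P x * a ^+ \rank (diff_mx K x0 (rcons s x)) <=
  (rho * Q ^+ K + a) * a ^+ \rank (diff_mx K x0 s).
Proof.
move=> sK P_le a_ge0 a_le1; set r := \rank (diff_mx K x0 s).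
pose in_span x := (x - x0 <= diff_mx K x0 s)%MS.
rewrite (bigID in_span) /= mulrDl; apply: lerD.
  apply: le_trans (_ : \sum_(x | in_span x) rho * a ^+ r <= _).
    apply: ler_sum => x _; apply: ler_pM; rewrite ?exprn_ge0 //.
    have [le_s _] := diff_mx_rcons x0 x sK.
    by apply: ler_wiXn2l => //; exact: mxrank_leqif_sup le_s.
  have card_span : (#|in_span|%:R : R) <= Q ^+ K.
    rewrite -natrX ler_nat; apply: leq_trans (card_coset_submx (diff_mx K x0 s) x0).
    by apply/subset_leq_card/subsetP => x; rewrite inE.
  rewrite sumr_const -[_ *+ _]mulr_natr mulrAC ler_wpM2r ?exprn_ge0 // ler_wpM2l //.
  exact: le_trans (P_le x0).
apply: le_trans (_ : \sum_(x | ~~ in_span x) P x * a ^+ r.+1 <= _).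
  apply: ler_sum => x xNspan; rewrite ler_wpM2l // ler_wiXn2l //.
  have [le_s x_le] := diff_mx_rcons x0 x sK.
  rewrite (ltn_leqif (mxrank_leqif_sup le_s)); apply: contra xNspan => le_rcons.
  exact: submx_trans x_le le_rcons.
rewrite -mulr_suml exprS mulrA ler_wpM2r ?exprn_ge0 // ler_piMl //.
by rewrite -P_sum1 [X in _ <= X](bigID in_span) /= lerDr sumr_ge0.
Qed.

Lemma iter_mean_diff_rank_le K x0 (a rho : R) j s :
  (forall x, P x <= rho) -> 0 <= a -> a <= 1 -> (size s + j <= K)%N ->
  iter_mean P j (fun t => a ^+ \rank (diff_mx K x0 t)) s <= (rho * Q ^+ K + a) ^+ j.
Proof.
move=> P_le a_ge0 a_le1 sjK; have rho_ge0 : 0 <= rho := le_trans (P_ge0 x0) (P_le x0).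
have c_ge0 : 0 <= rho * Q ^+ K + a by rewrite addr_ge0 ?mulr_ge0 ?exprn_ge0.
apply: le_trans (iter_mean_geometric P_ge0 c_ge0 _ sjK) _.
  by move=> t tK; exact: diff_rank_step.
by rewrite ler_piMr ?exprn_ge0 ?exprn_ile1.
Qed.

Lemma sum_distr_HZ_expr C m (H : 'M[F]_(m, n)) k : parity_check C H ->
  \sum_y distr_HZ H P y ^+ k.+1 =
  \sum_x P x * iter_mean P k (fun t => (all (fun z => z - x \in C) t)%:R) [:: x].
Proof.
move=> [_ CH]; rewrite (sum_pushforward_expr (fun x => H *m x^T)).
apply: eq_bigr => x _; rewrite iter_mean_all /= CH subrr trmx0 mulmx0 eqxx mul1r.
congr (_ * (_ ^+ _)); apply: eq_bigl => z.
by rewrite CH linearB /= mulmxBr subr_eq0.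
Qed.

Lemma mean_codes_all_le d m K x0 t : (d + m)%N = n ->
  #|linear_codes F n d|%:R^-1 *
    \sum_(C in linear_codes F n d) (all (fun z => z - x0 \in C) t)%:R
  <= ((#|F| ^ m)%:R^-1) ^+ \rank (diff_mx K x0 t) :> R.
Proof.
move=> dmn; set N := #|linear_codes F n d|.
have count_le :
    (\sum_(C in linear_codes F n d) (all (fun z => (z - x0)%R \in C) t : nat) <=
     #|codes_containing d (diff_mx K x0 t)|)%N.
  rewrite /codes_containing card_set_sumE leq_sum // => C /linear_codesP [G _ ->].
  case: allP => // t_in; rewrite lt0b rows_in_submx; apply/row_subP => i.
  rewrite rowK; have [lt_it|le_ti] := ltnP i (size t).
    by have := t_in _ (mem_nth x0 lt_it); rewrite inE.
  by rewrite nth_default // subrr sub0mx.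
have [->|N_gt0] := posnP N; first by rewrite invr0 mul0r exprn_ge0 // invr_ge0.
have qm_gt0 : (0 < #|F| ^ (m * \rank (diff_mx K x0 t)))%N.
  by rewrite expn_gt0 ltnW // finNzRing_gt1.
rewrite -natr_sum exprVn -natrX -expnM ler_pdivrMl ?ltr0n // ler_pdivlMr ?ltr0n //.
rewrite -natrM ler_nat; apply: leq_trans (card_codes_containing_bound (diff_mx K x0 t) dmn).
by rewrite leq_mul2r count_le orbT.
Qed.

Lemma mean_sup_norm_expr_le d m k (Hc : {set 'rV[F]_n} -> 'M[F]_(m, n)) (rho : R) :
  (d + m)%N = n ->
  (forall C, C \in linear_codes F n d -> parity_check C (Hc C)) ->
  (forall x, P x <= rho) ->
  #|linear_codes F n d|%:R^-1 * \sum_(C in linear_codes F n d)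
     sup_norm (fun y => (#|F| ^ m)%:R * distr_HZ (Hc C) P y) ^+ k.+1
  <= (#|F| ^ m)%:R ^+ k.+1 * (rho * Q ^+ k.+1 + (#|F| ^ m)%:R^-1) ^+ k.
Proof.
move=> dmn pcH P_le; set N := #|linear_codes F n d|; set a := (#|F| ^ m)%:R^-1 : R.
set c := rho * Q ^+ k.+1 + a.
pose ind (C : {set 'rV[F]_n}) x t : R := (all (fun z => z - x \in C) t)%:R.
have a_ge0 : 0 <= a by rewrite invr_ge0 ler0n.
have qm_ge1 : 1 <= (#|F| ^ m)%:R :> R by rewrite ler1n expn_gt0 ltnW // finNzRing_gt1.
have a_le1 : a <= 1 by rewrite invf_le1 // (lt_le_trans ltr01).
have sup_le C : C \in linear_codes F n d ->
    sup_norm (fun y => (#|F| ^ m)%:R * distr_HZ (Hc C) P y) ^+ k.+1 <=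
    (#|F| ^ m)%:R ^+ k.+1 * \sum_x P x * iter_mean P k (ind C x) [:: x].
  move=> Cc; apply: le_trans (sup_norm_expr_le _ (ltn0Sn k)) _.
  rewrite -(sum_distr_HZ_expr _ (pcH C Cc)) mulr_sumr; apply: ler_sum => y _.
  by rewrite normrM exprMn ger0_norm ?ger0_norm ?sumr_ge0.
have mean_ind_le x :
    N%:R^-1 * \sum_(C in linear_codes F n d) iter_mean P k (ind C x) [:: x] <= c ^+ k.
  rewrite iter_mean_sum; apply: le_trans (iter_mean_le P_ge0 _ _ _) _.
    by move=> t; exact: (mean_codes_all_le k.+1 x t dmn).
  exact: iter_mean_diff_rank_le.
apply: le_trans (_ : N%:R^-1 * \sum_(C in linear_codes F n d)
    (#|F| ^ m)%:R ^+ k.+1 * \sum_x P x * iter_mean P k (ind C x) [:: x] <= _).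
  by rewrite ler_wpM2l ?invr_ge0 //; apply: ler_sum.
rewrite -mulr_sumr mulrCA ler_wpM2l ?exprn_ge0 // exchange_big mulr_sumr /=.
apply: le_trans (_ : \sum_x P x * c ^+ k <= _); last by rewrite -mulr_suml P_sum1 mul1r.
by apply: ler_sum => x _; rewrite -mulr_sumr mulrCA ler_wpM2l.
Qed.

End SyndromeMoments.

Lemma moment_bound_closed_form (K : fieldType) (Q : K) m k : Q != 0 ->
  (Q ^+ m) ^+ k.+1 * ((Q ^+ (m + k))^-1 * Q ^+ k.+1 + (Q ^+ m)^-1) ^+ k =
  Q ^+ m * (Q + 1) ^+ k.
Proof.
move=> Q_neq0; have Qm_neq0 : Q ^+ m != 0 by rewrite expf_neq0.
have -> : (Q ^+ (m + k))^-1 * Q ^+ k.+1 + (Q ^+ m)^-1 = (Q + 1) / Q ^+ m.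
  by rewrite exprD exprS invfM; field; rewrite Qm_neq0 expf_neq0.
by rewrite expr_div_n exprS -mulrA [_ * (_ / _)]mulrC divfK ?expf_neq0.
Qed.

Theorem proposition3p8 (R : realType) (F : finFieldType) (eps : R) :
  0 < eps ->
  exists C : R,
  forall (n : nat), (0 < n)%N ->
  forall (P : {ffun 'rV[F]_n -> R}), is_distr P ->
  forall (m : nat), (0 < m)%N ->
  ((m%:R : R)%:E <= min_entropy F P - (n%:R * eps)%:E)%E ->
  forall Hc : {set 'rV[F]_n} -> 'M[F]_(m, n),
  (forall Cd, Cd \in linear_codes F n (n - m) -> parity_check Cd (Hc Cd)) ->
  (#|linear_codes F n (n - m)|%:R)^-1 *
    \sum_(Cd in linear_codes F n (n - m))
      sup_norm (fun y : 'cV[F]_m => (#|F| ^ m)%:R * distr_HZ (Hc Cd) P y)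
  <= C.
Proof.
move=> eps_gt0; set Q : R := #|F|%:R; have Q_gt1 : 1 < Q by rewrite ltr1n finNzRing_gt1.
pose c := (Num.truncn eps^-1).+1.
have c_eps : 1 < c%:R * eps by rewrite -ltr_pdivrMr // div1r truncnS_gt.
exists (2 * ((Q + 1) * Q ^+ c)) => n _ P distrP m _ entropy Hc pcH.
have [P_ge0 P_sum1] := distrP; set k := Num.truncn (n%:R * eps).
have P_le x : P x <= (Q ^+ (m + k))^-1.
  apply: le_min_entropy_prob; move: entropy; rewrite leeBrDr //; apply: le_trans.
  by rewrite -EFinD lee_fin natrD lerD2l truncn_le mulr_ge0 ?ler0n ?ltW.
have mk_le_n : (m + k <= n)%N.
  have := distr_mass_bound distrP P_le; rewrite card_mx mul1n natrX -/Q.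
  by rewrite ler_pdivlMr ?exprn_gt0 ?(lt_trans ltr01) // mul1r ler_eXn2l.
have m_le_n : (m <= n)%N := leq_trans (leq_addr k m) mk_le_n.
have m_le_ck : (m <= c * k.+1)%N.
  rewrite (leq_trans m_le_n) // ltnW // -(ltr_nat R) natrM -(ltr_pM2r eps_gt0).
  have k_gt : n%:R * eps < k.+1%:R := truncnS_gt _.
  have : 0 <= k.+1%:R :> R by []; nra.
apply: (mean_le_of_moment (K := k.+1)) => //.
- by rewrite mulr_gt0 ?exprn_gt0 ?addr_gt0 // (lt_trans ltr01).
- by move=> C; exact: sup_norm_ge0.
apply: le_trans (mean_sup_norm_expr_le P_ge0 P_sum1 k (subnK m_le_n) pcH P_le) _.
rewrite natrX moment_bound_closed_form ?gt_eqF ?(lt_trans ltr01) //.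
have Q1_gt1 : 1 < Q + 1 by rewrite ltrDr (lt_trans ltr01).
by rewrite exprMn mulrC -exprM ler_pM ?exprn_ge0 ?ler_eXn2l ?ltW ?(lt_trans ltr01).
Qed.
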